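(* Let $m\ge 2$ and let $e_1=(1,0)$, $e_2=(0,1)$ be the standard generating set of $\mathbb{Z}\times\mathbb{Z}_m$. Then $\mathrm{Cay}(\mathbb{Z}\times\mathbb{Z}_m;e_1,e_2)$ has two arc-disjoint two-way infinite hamiltonian paths if and only if $m=2$.
   Context: The Cayley digraph $\mathrm{Cay}(G;a,b)$ has vertex set $G$ and an arc from $v$ to $v+s$ for all $v\in G$, $s\in\{a,b\}$. A two-way infinite hamiltonian path is a doubly-infinite sequence $\ldots,v_{-1},v_0,v_1,\ldots$ listing every vertex exactly once with an arc from $v_i$ to $v_{i+1}$ for all $i\in\mathbb{Z}$. Arc-disjoint means sharing no arc. *)

From mathcomp Require Import all_boot all_order all_algebra.
Set Implicit Arguments. Unset Strict Implicit. Unset Printing Implicit Defensive.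
Import GRing.Theory.
Local Open Scope ring_scope.

(* Cayley digraph Cay(G; a, b) on an additive group G: vertex set G, and an arc
   (v, s) from v to v + s for each v in G and s in {a, b}.
   Arcs are represented as pairs (tail, generator). *)
Definition cay_arc (G : zmodType) (a b : G) (v : G) (s : G) : Prop :=
  s = a \/ s = b.

Definition two_way_ham_path (G : zmodType) (a b : G)
    (v : int -> G) (s : int -> G) : Prop :=
  bijective v /\
  forall i : int, cay_arc a b (v i) (s i) /\ v (i + 1) = v i + s i.

Definition path_uses_arc (G : zmodType) (v s : int -> G) (x : G) (t : G) : Prop :=
  exists i : int, v i = x /\ s i = t.

Definition has_two_arc_disjoint_ham_paths (G : zmodType) (a b : G) : Prop :=
  exists v1 s1 v2 s2 : int -> G,
    two_way_ham_path a b v1 s1 /\ two_way_ham_path a b v2 s2 /\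
    forall x t : G, ~ (path_uses_arc v1 s1 x t /\ path_uses_arc v2 s2 x t).

(* The group Z x Z_m (for m >= 2, 'Z_m is Z/mZ) and its standard generators. *)
Definition ZxZm (m : nat) : zmodType := (int * 'Z_m)%type.
Definition e1 (m : nat) : ZxZm m := (1, 0).
Definition e2 (m : nat) : ZxZm m := (0, 1).

From mathcomp Require Import all_boot all_order all_algebra zify.
Import GRing.Theory Num.Theory.
Set Implicit Arguments. Unset Strict Implicit. Unset Printing Implicit Defensive.
Local Open Scope ring_scope.

(* Let t(x) be the generator a path uses to leave x. In a hamiltonian path of Cay(G; a, b),
   t(x + a - b) = t(x): otherwise x + a would have two predecessors or none. In Z x Z_m this
   makes t a function of the diagonal class x.1 + x.2 in Z_m, which increases by 1 at each
   step, so every m steps the first coordinate advances by the number w of classes left along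
   e1. The vertex v_0 + e1 - e2 has the class of v_0, hence equals v_(q m) for some q; then
   w q = 1 and w = 1. Two arc-disjoint paths leave every vertex along different generators,
   so their numbers w add up to m, whence m = 2. For m = 2 the staircase e2, e1, e2, e1, ...
   and its translate by e2 are arc-disjoint hamiltonian paths. *)

Lemma mulrz_progression (V : zmodType) (f : int -> V) (c : V) :
  (forall i, f (i + 1) = f i + c) -> forall i, f i = f 0 + c *~ i.
Proof.
move=> fS; elim/int_rect => [|k IHk|k IHk]; first by rewrite mulr0z addr0.
  by rewrite intS addrC fS IHk mulrzDr mulr1z addrA.
have -> : - (k.+1 : int) = - k%:Z - 1 by rewrite intS opprD addrC.
by apply: (addIr c); rewrite -fS subrK IHk mulrzBr mulr1z -addrA subrK.
Qed.

Lemma periodic_mulrz (V : zmodType) (T : Type) (f : V -> T) (d : V) :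
  (forall x, f (x + d) = f x) -> forall x k, f (x + d *~ k) = f x.
Proof.
move=> fD x; elim/int_rect => [|k IHk|k IHk]; first by rewrite mulr0z addr0.
  by rewrite intS mulrzDr mulr1z [d + _]addrC addrA fD.
have -> : - (k.+1 : int) = - k%:Z - 1 by rewrite intS opprD addrC.
by rewrite mulrzBr mulr1z addrA -IHk -(fD (_ - d)) subrK.
Qed.

Lemma intr_Zp_eq0 (m : nat) (j : int) : (1 < m)%N ->
  ((j%:~R : 'Z_m) == 0) = (m %| j)%Z.
Proof.
move=> m_gt1; rewrite dvdzE.
case: j => k; rewrite ?NegzE ?mulrNz ?oppr_eq0 ?abszN -pmulrn /=;
  by rewrite -(inj_eq val_inj) /= val_Zp_nat.
Qed.

Lemma addr1_neq (R : nzRingType) (x : R) : x + 1 != x.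
Proof. by rewrite -subr_eq0 addrAC subrr add0r oner_eq0. Qed.

Lemma pairD (U V : zmodType) (a c : U) (b d : V) : (a, b) + (c, d) = (a + c, b + d).
Proof. by []. Qed.

Lemma gen_choice_invariant (G : zmodType) (a b : G) (t : G -> G) :
  a != b -> (forall x, t x = a \/ t x = b) -> bijective (fun x => x + t x) ->
  forall x, t (x + (a - b)) = t x.
Proof.
move=> neq_ab tP [succ_inv succK succ_invK] x.
have succ_inj := can_inj succK.
have [tx|tx] := tP x.
  rewrite tx; have [//|txd] := tP (x + (a - b)).
  suff : a - b = 0 by move/eqP; rewrite subr_eq0 (negPf neq_ab).
  by apply: (addrI x); rewrite addr0; apply: succ_inj; rewrite /= txd tx addrA subrK.
pose y := succ_inv (x + a).
have /= succ_y : y + t y = x + a by rewrite succ_invK.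
have [ty|ty] := tP y.
  have y_x : y = x by apply: (addIr a); rewrite -{1}ty succ_y.
  by move: neq_ab; rewrite -tx -ty y_x eqxx.
by rewrite tx -ty; congr t; apply: (addIr (t y)); rewrite succ_y ty addrA subrK.
Qed.

Section OutGenerator.
Variables (G : zmodType) (a b : G) (v s : int -> G) (w : G -> int).
Hypotheses (vK : cancel v w) (wK : cancel w v)
  (v_path : forall i, cay_arc a b (v i) (s i) /\ v (i + 1) = v i + s i).

Definition out_gen (x : G) : G := s (w x).

Lemma out_gen_path i : out_gen (v i) = s i.
Proof. by rewrite /out_gen vK. Qed.

Lemma out_genP x : out_gen x = a \/ out_gen x = b.
Proof. by case: (v_path (w x)). Qed.

Lemma path_uses_out_gen x : path_uses_arc v s x (out_gen x).
Proof. by exists (w x); rewrite wK. Qed.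

Lemma out_gen_succ x : x + out_gen x = v (w x + 1).
Proof. by case: (v_path (w x)) => _ ->; rewrite wK. Qed.

Lemma out_gen_succ_bij : bijective (fun x => x + out_gen x).
Proof.
exists (fun y => v (w y - 1)) => [x | y]; rewrite ?out_gen_succ vK.
  by rewrite addrK wK.
by rewrite subrK wK.
Qed.

End OutGenerator.

Lemma ham_path_translate (G : zmodType) (a b g : G) (v s : int -> G) :
  two_way_ham_path a b v s -> two_way_ham_path a b (fun i => v i + g) s.
Proof.
case=> [[w vK wK] v_path]; split.
  by exists (fun x => w (x - g)) => [i | x]; rewrite ?addrK ?vK ?wK ?subrK.
by move=> i; case: (v_path i) => arc ->; split; rewrite // addrAC.
Qed.

(* Identifies the quotient of Z x Z_m by the subgroup generated by e1 - e2 with Z_m. *)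
Definition diag_class {m : nat} (x : ZxZm m) : 'Z_m := x.1%:~R + x.2.

Lemma diag_classD m (x y : ZxZm m) :
  diag_class (x + y) = diag_class x + diag_class y.
Proof. by rewrite /diag_class /= intrD addrACA. Qed.

Lemma diag_class_e1 m : diag_class (e1 m) = 1.
Proof. by rewrite /diag_class /= addr0. Qed.

Lemma diag_class_e2 m : diag_class (e2 m) = 1.
Proof. by rewrite /diag_class /= add0r. Qed.

Lemma diag_class_decomp m (x : ZxZm m) :
  x = ((0, diag_class x) : ZxZm m) + (e1 m - e2 m) *~ x.1.
Proof.
case: x => k c; apply: injective_projections => /=.
  by rewrite (raddfMz fst) /= subr0 add0r intz.
by rewrite /diag_class (raddfMz snd) /= add0r mulNrz addrAC subrr add0r.
Qed.

Lemma diag_invariantE m (t : ZxZm m -> ZxZm m) :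
  (forall x, t (x + (e1 m - e2 m)) = t x) -> forall x, t x = t (0, diag_class x).
Proof. by move=> t_inv x; rewrite {1}[x]diag_class_decomp periodic_mulrz. Qed.

Lemma e1_neq_e2 m : e1 m != e2 m.
Proof. by apply/eqP => -[]. Qed.

Lemma diag_class_e1Be2 m : diag_class (e1 m - e2 m) = 0.
Proof. by rewrite /diag_class /= subr0 sub0r subrr. Qed.

(* For the out-generator t of a path, the number of diagonal classes left along e1, which is
   the advance of the first coordinate over m consecutive steps. *)
Definition winding {m : nat} (t : ZxZm m -> ZxZm m) : int :=
  \sum_(c : 'Z_m) (t (0, c)).1.

Section Winding.
Variable n : nat.
Local Notation m := n.+2.
Variables (v s : int -> ZxZm m) (w : ZxZm m -> int).
Hypotheses (vK : cancel v w) (wK : cancel w v)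
  (v_path : forall i, cay_arc (e1 m) (e2 m) (v i) (s i) /\ v (i + 1) = v i + s i).
Local Notation t := (out_gen s w).

Lemma out_gen_diag x : t x = t (0, diag_class x).
Proof.
apply: diag_invariantE.
apply: (gen_choice_invariant (e1_neq_e2 m)); [exact: out_genP | exact: out_gen_succ_bij].
Qed.

Lemma diag_class_path i : diag_class (v i) = diag_class (v 0) + i%:~R.
Proof.
apply: (mulrz_progression (f := fun i => diag_class (v i))) => {}i.
by case: (v_path i) => -[] -> ->; rewrite diag_classD ?diag_class_e1 ?diag_class_e2.
Qed.

Lemma fst_path_step i : (v (i + 1)).1 = (v i).1 + (t (0, diag_class (v i))).1.
Proof. by case: (v_path i) => _ ->; rewrite -out_gen_diag (out_gen_path s vK). Qed.

Lemma fst_path_sum i (k : nat) :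
  (v (i + k%:Z)).1 = (v i).1 + \sum_(j < k) (t (0, diag_class (v i) + j%:R)).1.
Proof.
elim: k => [|k IHk]; first by rewrite addr0 big_ord0 addr0.
rewrite big_ord_recr /= addrA -IHk -[k.+1]addn1 PoszD addrA fst_path_step.
by rewrite (diag_class_path (i + k)) (diag_class_path i) intrD addrA.
Qed.

Lemma fst_path_period i : (v (i + m%:Z)).1 = (v i).1 + winding t.
Proof.
rewrite fst_path_sum /winding; congr (_ + _).
rewrite [RHS](reindex_inj (addrI (diag_class (v i)))) /=.
by apply: eq_bigr => j _; rewrite natr_Zp.
Qed.

Lemma winding_ge0 : 0 <= winding t.
Proof. by apply: sumr_ge0 => c _; case: (out_genP w v_path (0, c)) => ->. Qed.

Lemma winding_out_gen_eq1 : winding t = 1.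
Proof.
have fst_period k : (v (k * m%:Z)).1 = (v 0).1 + winding t *~ k.
  rewrite -[in RHS](mul0r m%:Z).
  apply: (mulrz_progression (f := fun k => (v (k * m%:Z)).1)) => {}k.
  by rewrite mulrDl mul1r fst_path_period.
pose j := w (v 0 + (e1 m - e2 m)).
have vj : v j = v 0 + (e1 m - e2 m) by rewrite wK.
have /dvdzP [q j_eq] : (m %| j)%Z.
  rewrite -intr_Zp_eq0 //; apply/eqP/(addrI (diag_class (v 0))).
  by rewrite -diag_class_path vj diag_classD diag_class_e1Be2.
have one_eq : 1 = winding t * q.
  by have := fst_period q; rewrite -j_eq vj /= => /addrI; rewrite subr0 mulrzz.
have : (winding t %| 1)%Z by apply/dvdzP; exists q; rewrite mulrC.
by rewrite dvdzE dvdn1 => /eqP; have := winding_ge0; lia.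
Qed.

End Winding.

Lemma ham_path_winding n (v s : int -> ZxZm n.+2) :
  two_way_ham_path (e1 n.+2) (e2 n.+2) v s ->
  exists t : ZxZm n.+2 -> ZxZm n.+2,
    [/\ forall x, t x = e1 n.+2 \/ t x = e2 n.+2,
         forall x, path_uses_arc v s x (t x) & winding t = 1].
Proof.
case=> [[w vK wK] v_path]; exists (out_gen s w); split.
- exact: out_genP v_path.
- exact: path_uses_out_gen wK.
- exact: winding_out_gen_eq1 vK wK v_path.
Qed.

Lemma arc_disjoint_ham_paths_eq2 n :
  has_two_arc_disjoint_ham_paths (e1 n.+2) (e2 n.+2) -> n.+2 = 2.
Proof.
case=> [va [sa [vb [sb [Pa [Pb disj]]]]]].
have [ta [taP ta_arc wind_a]] := ham_path_winding Pa.
have [tb [tbP tb_arc wind_b]] := ham_path_winding Pb.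
have fst_sum c : (ta (0, c)).1 + (tb (0, c)).1 = 1.
  have : ta (0, c) <> tb (0, c).
    by move=> E; apply: (disj (0, c) (ta (0, c))); rewrite {2}E.
  by case: (taP (0, c)) => ->; case: (tbP (0, c)) => ->.
have : winding ta + winding tb = n.+2%:Z.
  rewrite /winding -big_split /= (eq_bigr _ (fun c _ => fst_sum c)).
  by rewrite sumr_const card_ord natz.
by rewrite wind_a wind_b; lia.
Qed.

Lemma Z2_neq_addr1 (b c : 'Z_2) : b != c -> b = c + 1.
Proof.
by case: b c => [[|[|//]] ?] [[|[|//]] ?]; rewrite ?eqxx // => _; apply: val_inj.
Qed.

(* The staircase (0,0), (0,1), (1,1), (1,0), (2,0), (2,1), ... alternating e2 and e1. *)
Definition stair (i : int) : ZxZm 2 := ((i %/ 2)%Z, (i - (i %/ 2)%Z)%:~R).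
Definition stair_gen (i : int) : ZxZm 2 := if (i %% 2 == 0)%Z then e2 2 else e1 2.
Definition stair_index (x : ZxZm 2) : int :=
  2 * x.1 + (if x.2 == x.1%:~R then 0 else 1).

Lemma int_even_odd (i : int) : exists q, i = 2 * q \/ i = 2 * q + 1.
Proof. by exists (i %/ 2)%Z; lia. Qed.

Lemma stair_even q : stair (2 * q) = (q, q%:~R).
Proof. by rewrite /stair (_ : (2 * q %/ 2)%Z = q) 1?(_ : 2 * q - q = q) //; lia. Qed.

Lemma stair_odd q : stair (2 * q + 1) = (q, q%:~R + 1).
Proof.
rewrite /stair (_ : ((2 * q + 1) %/ 2)%Z = q) 1?(_ : 2 * q + 1 - q = q + 1) ?intrD //; lia.
Qed.

Lemma stair_gen_even q : stair_gen (2 * q) = e2 2.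
Proof. by rewrite /stair_gen (_ : (2 * q %% 2)%Z = 0) //; lia. Qed.

Lemma stair_gen_odd q : stair_gen (2 * q + 1) = e1 2.
Proof. by rewrite /stair_gen (_ : ((2 * q + 1) %% 2)%Z = 1) //; lia. Qed.

Lemma stairK : cancel stair stair_index.
Proof.
move=> i; have [q [->|->]] := int_even_odd i.
  by rewrite stair_even /stair_index eqxx addr0.
by rewrite stair_odd /stair_index (negPf (addr1_neq _)).
Qed.

Lemma stair_indexK : cancel stair_index stair.
Proof.
case=> a c; rewrite /stair_index /=; case: eqP => [-> | /eqP/Z2_neq_addr1 ->].
  by rewrite addr0 stair_even.
exact: stair_odd.
Qed.

Lemma stairS i : stair (i + 1) = stair i + stair_gen i.
Proof.
have [q [->|->]] := int_even_odd i.
  by rewrite stair_odd stair_even stair_gen_even pairD addr0.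
rewrite stair_odd stair_gen_odd -addrA (_ : 1 + 1 = 2 * 1) // -mulrDr stair_even.
by rewrite pairD intrD addr0.
Qed.

Lemma stair_ham_path : two_way_ham_path (e1 2) (e2 2) stair stair_gen.
Proof.
split; first by exists stair_index; [exact: stairK | exact: stair_indexK].
move=> i; split; last exact: stairS.
by rewrite /cay_arc /stair_gen; case: ifP; [right | left].
Qed.

Lemma stair_shift_arc_disjoint x t :
  ~ (path_uses_arc stair stair_gen x t /\
     path_uses_arc (fun i => stair i + e2 2) stair_gen x t).
Proof.
case=> -[i [<- <-]] [j [/esym stair_ij gen_ij]].
suff ij : i = j.
  by move: stair_ij; rewrite ij -{1}[stair j]addr0 => /addrI/(congr1 (val \o snd)).
have /(congr1 fst) /= := stair_ij; rewrite addr0 => half_ij.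
by move: gen_ij; rewrite /stair_gen; case: ifP; case: ifP => // + + _; lia.
Qed.

Theorem mainTheorem17 (m : nat) (hm : (2 <= m)%N) :
  has_two_arc_disjoint_ham_paths (e1 m) (e2 m) <-> m = 2%N.
Proof.
case: m hm => [|[|n]] // _; split; first exact: arc_disjoint_ham_paths_eq2.
case=> ->; exists stair, stair_gen, (fun i => stair i + e2 2), stair_gen.
split; first exact: stair_ham_path.
by split; [exact: ham_path_translate stair_ham_path | exact: stair_shift_arc_disjoint].
Qed.
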